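(* Let $\lambda<\kappa$ be cardinals (with $\lambda\ge1$) and let $(S,\mu)$ be a multisemigroup with multiplicities bounded by $\kappa$. Let $\Phi_{\lambda,\kappa}:\mathrm{Card}_\kappa\to\mathrm{Card}_\lambda$ be defined by $\Phi_{\lambda,\kappa}(\nu)=\nu$ if $\nu\le\lambda$ and $\Phi_{\lambda,\kappa}(\nu)=\lambda$ otherwise. Then $(S,\Phi_{\lambda,\kappa}\circ\mu)$ (meaning $(s,t)\mapsto\Phi_{\lambda,\kappa}\circ\mu_{s,t}$) is a multisemigroup with multiplicities bounded by $\lambda$.
   Context: For a cardinal $\kappa\ge1$, $\mathrm{Card}_\kappa$ denotes the complete semiring of all cardinals $\le\kappa$, with sum of arbitrary families given by cardinal sum and product by cardinal product, every cardinal greater than $\kappa$ being identified with $\kappa$. $\mathcal{B}_\kappa(S)$ is the set of functions $S\to\mathrm{Card}_\kappa$. For a cardinal $\lambda'$ and $\nu\in\mathcal{B}_\kappa(S)$, $\lambda'\nu$ is the pointwise sum of $\lambda'$ copies of $\nu$. A multisemigroup with multiplicities bounded by $\kappa$ is a pair $(S,\mu)$, $S$ a non-empty set and $\mu:S\times S\to\mathcal{B}_\kappa(S)$, $(s,t)\mapsto\mu_{s,t}$, such that for all $r,s,t\in S$: $\sum_{i\in S}\mu_{s,t}(i)\mu_{r,i}=\sum_{j\in S}\mu_{r,s}(j)\mu_{j,t}$ (computed in $\mathcal{B}_\kappa(S)$). *)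

From HB Require Import structures.
From mathcomp Require Import all_boot all_order all_algebra.
From mathcomp Require Import boolp classical_sets functions cardinality.
Set Implicit Arguments. Unset Strict Implicit. Unset Printing Implicit Defensive.
Local Open Scope classical_set_scope.
Local Open Scope card_scope.

(* Cardinals are represented by sets A : set T (the cardinal |A|) over a fixed
   ambient type T; the cardinal kappa is represented by K : set T.
   A cardinal nu <= kappa is a set A with A #<= K. *)

(* Equality of (the images in Card_kappa of) two cardinals |X| and |Y|:
   every cardinal > kappa is identified with kappa, i.e. the truncation
   min(|X|, kappa) of both agree. *)
Definition card_eq_trunc (T U V : Type) (K : set T) (X : set U) (Y : set V) : Prop :=
  (K #<= X /\ K #<= Y) \/ X #= Y.

(* Left side of the associativity law at coordinate x:
   sum_{i in S} mu_{s,t}(i) * mu_{r,i}(x)   (cardinal sum of cardinal products) *)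
Definition mss_lhs (T S : Type) (mu : S -> S -> S -> set T) (r s t x : S) :=
  [set: {i : S & ({a : T | mu s t i a} * {b : T | mu r i x b})%type}].
Arguments mss_lhs {T S} mu r s t x.

Definition mss_rhs (T S : Type) (mu : S -> S -> S -> set T) (r s t x : S) :=
  [set: {j : S & ({a : T | mu r s j a} * {b : T | mu j t x b})%type}].
Arguments mss_rhs {T S} mu r s t x.

(* Computing the sums and
   products in true cardinal arithmetic and truncating at kappa at the end
   agrees with computing in Card_kappa, since truncation is a homomorphism. *)
Definition is_multisemigroup (T S : Type) (K : set T) (mu : S -> S -> S -> set T) : Prop :=
  inhabited S /\
  (forall s t x : S, mu s t x #<= K) /\
  (forall r s t x : S, card_eq_trunc K (mss_lhs mu r s t x) (mss_rhs mu r s t x)).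

Definition Phi (T : Type) (L A : set T) : set T :=
  if pselect (A #<= L) then A else L.

From HB Require Import structures.
From mathcomp Require Import all_boot all_order all_algebra.
From mathcomp Require Import boolp classical_sets functions cardinality.
From Stdlib Require Import Eqdep.

(* Write [X]_λ for min(|X|, λ), so that [card_eq_trunc L X Y] says
   [X]_λ = [Y]_λ with λ = |L|.  For λ ≥ 1 this truncation is compatible
   with cardinal products and arbitrary sums, and [Phi L A]_λ = [A]_λ
   because any two cardinals are comparable.  Hence replacing every factor
   of both sides of the associativity law by its image under Φ leaves their
   λ-truncations unchanged, and these agree because the κ-truncations do
   and λ ≤ κ. *)

Local Open Scope classical_set_scope.
Local Open Scope card_scope.

Lemma card_le_setTP (X Y : Type) :
  [set: X] #<= [set: Y] <-> exists f : X -> Y, injective f.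
Proof.
split=> [/card_leP/injfunPex [f _ f_inj]|[f f_inj]].
  exists (val \o f \o to_setT) => x y /val_inj /f_inj.
  by rewrite !in_setT => /(_ isT isT) [].
apply/card_leP/injfunPex; exists (to_setT \o f \o val) => // u v _ _.
by move=> /(congr1 val) /f_inj /val_inj.
Qed.

Lemma card_eq_setTP (X Y : Type) :
  [set: X] #= [set: Y] <-> exists f : X -> Y, bijective f.
Proof.
have to_setTK Z : cancel val (@to_setT Z) by move=> z; apply: val_inj.
split=> [/card_bijP [f [g fK gK]]|[f [g fK gK]]].
  by exists (val \o f \o to_setT); exists (val \o g \o to_setT) => x /=;
    rewrite to_setTK ?fK ?gK.
by apply/card_bijP; exists (to_setT \o f \o val); exists (to_setT \o g \o val)
  => x /=; rewrite ?fK ?gK to_setTK.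
Qed.

Lemma card_setT_sig {T : Type} (A : set T) : [set: {x | A x}] #= A.
Proof.
apply: (card_eq_trans _ (card_setT A)); apply/card_eq_setTP.
exists (fun p => exist _ (proj1_sig p) (mem_set (proj2_sig p))).
exists (fun p => exist _ (val p) (set_mem (valP p))).
  by case=> x Ax; apply: eq_exist.
by case=> x Ax; apply: val_inj.
Qed.

Lemma setT_empty (X : Type) : ~ inhabited X -> [set: X] = set0.
Proof. by move=> X0; apply/seteqP; split=> // x; case: X0; constructor. Qed.

Lemma card_le_inhabited {T X : Type} {A : set T} :
  A !=set0 -> A #<= [set: X] -> inhabited X.
Proof.
move=> A0 AX; apply: contrapT => X0.
by move: AX; rewrite setT_empty // => /card_le0P A_eq0; case: A0; rewrite A_eq0.
Qed.

Lemma card_le_setT_total (X Y : Type) :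
  [set: X] #<= [set: Y] \/ [set: Y] #<= [set: X].
Proof.
(* A maximal partial bijection between X and Y is total on one side. *)
pose partial_bij (G : set (X * Y)) :=
  forall p q, G p -> G q -> (p.1 = q.1 <-> p.2 = q.2).
have [G [G_bij G_max]] :
    exists G, partial_bij G /\ forall B, G `<` B -> ~ partial_bij B.
  apply: Zorn_bigcup => F F_bij F_tot p q [A FA Ap] [B FB Bq].
  have [AB|BA] := F_tot A B FA FB.
  - exact: F_bij B FB p q (AB p Ap) Bq.
  - exact: F_bij A FA p q Ap (BA q Bq).
have [Gl|/existsNP [x0 Nx0]] := pselect (forall x, exists y, G (x, y)).
  left; apply/card_le_setTP; exists (fun x => projT1 (cid (Gl x))) => x1 x2 e.
  by apply/(G_bij _ _ (projT2 (cid (Gl x1))) (projT2 (cid (Gl x2)))).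
have [Gr|/existsNP [y0 Ny0]] := pselect (forall y, exists x, G (x, y)).
  right; apply/card_le_setTP; exists (fun y => projT1 (cid (Gr y))) => y1 y2 e.
  by apply/(G_bij _ _ (projT2 (cid (Gr y1))) (projT2 (cid (Gr y2)))).
exfalso; apply: (G_max (G `|` [set (x0, y0)])).
  split; first by move=> p Gp; left.
  by move=> /(_ (x0, y0) (or_intror erefl)) Gxy; apply: Nx0; exists y0.
move=> [a b] [c d] [Gp|[-> ->]] [Gq|[-> ->]] //=.
- exact: G_bij Gp Gq.
- by split=> e; exfalso; [apply: Nx0; exists b | apply: Ny0; exists a];
    rewrite -?e.
- by split=> e; exfalso; [apply: Nx0; exists d | apply: Ny0; exists c];
    rewrite ?e.
Qed.

Lemma card_le_total {T U : Type} (A : set T) (B : set U) : A #<= B \/ B #<= A.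
Proof.
have := card_le_setT_total A B.
by rewrite !(card_le_eql (card_setT _)) !(card_le_eqr (card_setT _)).
Qed.

Lemma card_eq_setX {A A' B B' : Type} :
  [set: A] #= [set: A'] -> [set: B] #= [set: B'] ->
  [set: A * B] #= [set: A' * B'].
Proof.
move=> /card_eq_setTP [f [f' fK f'K]] /card_eq_setTP [g [g' gK g'K]].
apply/card_eq_setTP; exists (fun p => (f p.1, g p.2)).
by exists (fun p => (f' p.1, g' p.2)) => -[a b] /=; rewrite ?fK ?gK ?f'K ?g'K.
Qed.

Lemma card_eq_setT_sigT (I : Type) (F F' : I -> Type) :
  (forall i, [set: F i] #= [set: F' i]) ->
  [set: {i & F i}] #= [set: {i & F' i}].
Proof.
move=> FF'.
have fgK i : exists fg : (F i -> F' i) * (F' i -> F i),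
    cancel fg.1 fg.2 /\ cancel fg.2 fg.1.
  by have /card_eq_setTP [f [g fK gK]] := FF' i; exists (f, g).
pose fg i := projT1 (cid (fgK i)).
have fK i : cancel (fg i).1 (fg i).2 := proj1 (projT2 (cid (fgK i))).
have gK i : cancel (fg i).2 (fg i).1 := proj2 (projT2 (cid (fgK i))).
apply/card_eq_setTP.
exists (fun p => existT _ (projT1 p) ((fg _).1 (projT2 p))).
by exists (fun p => existT _ (projT1 p) ((fg _).2 (projT2 p))) => -[i x] /=;
  rewrite ?fK ?gK.
Qed.

Lemma card_le_setTXl {A B : Type} (b : B) : [set: A] #<= [set: A * B].
Proof. by apply/card_le_setTP; exists (fun a => (a, b)) => a1 a2 []. Qed.

Lemma card_le_setTXr {A B : Type} (a : A) : [set: B] #<= [set: A * B].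
Proof. by apply/card_le_setTP; exists (fun b => (a, b)) => b1 b2 []. Qed.

Lemma card_le_setT_sigT {I : Type} (F : I -> Type) (i : I) :
  [set: F i] #<= [set: {i & F i}].
Proof.
by apply/card_le_setTP; exists (existT F i) => x y; apply: inj_pair2.
Qed.

Section TruncatedCardinalEquality.
Context {T : Type} {L : set T}.

Lemma card_eq_truncW {U V : Type} {X : set U} {Y : set V} :
  X #= Y -> card_eq_trunc L X Y.
Proof. by right. Qed.

Lemma card_eq_trunc_sym {U V : Type} {X : set U} {Y : set V} :
  card_eq_trunc L X Y -> card_eq_trunc L Y X.
Proof. by case=> [[LX LY]|XY]; [left|right; rewrite card_eq_sym]. Qed.

Lemma card_eq_trunc_trans {U V W : Type} {X : set U} {Y : set V} {Z : set W} :
  card_eq_trunc L X Y -> card_eq_trunc L Y Z -> card_eq_trunc L X Z.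
Proof.
case=> [[LX LY]|XY] [[LY' LZ]|YZ].
- by left.
- by left; split=> //; rewrite -(card_le_eqr YZ).
- by left; split=> //; rewrite (card_le_eqr XY).
- by right; apply: card_eq_trans XY YZ.
Qed.

Lemma card_eq_trunc_le {T' U V : Type} {K : set T'} {X : set U} {Y : set V} :
  L #<= K -> card_eq_trunc K X Y -> card_eq_trunc L X Y.
Proof.
move=> LK [[KX KY]|XY]; last by right.
by left; split; apply: card_le_trans LK _.
Qed.

Lemma card_eq_trunc_Phi (A : set T) : card_eq_trunc L (Phi L A) A.
Proof.
rewrite /Phi; case: (pselect (A #<= L)) => [AL|NAL] /=; first by right.
by left; split=> //; have [/NAL []|] := card_le_total A L.
Qed.

Lemma card_eq_trunc_sig_Phi (A : set T) :
  card_eq_trunc L [set: {x | Phi L A x}] [set: {x | A x}].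
Proof.
apply: card_eq_trunc_trans (card_eq_truncW (card_setT_sig _)) _.
apply: card_eq_trunc_trans (card_eq_trunc_Phi A) _.
exact/card_eq_truncW/card_esym/card_setT_sig.
Qed.

Hypothesis L0 : L !=set0.

Lemma card_eq_trunc_inhabited {X Y : Type} :
  card_eq_trunc L [set: X] [set: Y] -> inhabited X -> inhabited Y.
Proof.
case=> [[_ LY]|/card_eq_setTP [f _]] [x]; last exact: inhabits (f x).
exact: card_le_inhabited L0 LY.
Qed.

Lemma card_eq_trunc_setX {A A' B B' : Type} :
  card_eq_trunc L [set: A] [set: A'] -> card_eq_trunc L [set: B] [set: B'] ->
  card_eq_trunc L [set: A * B] [set: A' * B'].
Proof.
move=> AA' BB'.
have [[[a b]]|AB0] := pselect (inhabited (A * B)); last first.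
  have A'B'0 : ~ inhabited (A' * B').
    move=> [[a' b']]; apply: AB0.
    have [a] := card_eq_trunc_inhabited (card_eq_trunc_sym AA') (inhabits a').
    have [b] := card_eq_trunc_inhabited (card_eq_trunc_sym BB') (inhabits b').
    exact: inhabits (a, b).
  by right; rewrite !setT_empty.
have [a'] := card_eq_trunc_inhabited AA' (inhabits a).
have [b'] := card_eq_trunc_inhabited BB' (inhabits b).
case: AA' => [[LA LA']|AA'].
  by left; split; [exact: card_le_trans LA (card_le_setTXl b)|
    exact: card_le_trans LA' (card_le_setTXl b')].
case: BB' => [[LB LB']|BB'].
  by left; split; [exact: card_le_trans LB (card_le_setTXr a)|
    exact: card_le_trans LB' (card_le_setTXr a')].
by right; apply: card_eq_setX.
Qed.

Lemma card_eq_trunc_sigT {I : Type} {F F' : I -> Type} :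
  (forall i, card_eq_trunc L [set: F i] [set: F' i]) ->
  card_eq_trunc L [set: {i & F i}] [set: {i & F' i}].
Proof.
move=> FF'.
have [[i [LF LF']]|NLF] :=
  pselect (exists i, L #<= [set: F i] /\ L #<= [set: F' i]).
  by left; split; [exact: card_le_trans LF (card_le_setT_sigT F i)|
    exact: card_le_trans LF' (card_le_setT_sigT F' i)].
right; apply: card_eq_setT_sigT => i.
by case: (FF' i) => // LF; case: NLF; exists i.
Qed.

End TruncatedCardinalEquality.

Theorem proposition11 (T S : Type) (L K : set T) (mu : S -> S -> S -> set T) :
  L != set0 ->
  L #<= K -> ~ (K #<= L) ->
  is_multisemigroup K mu ->
  is_multisemigroup L (fun s t x => Phi L (mu s t x)).
Proof.
move=> /set0P L0 LK _ [S0 [_ mu_assoc]].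
split=> //; split=> [s t x|r s t x]; first by rewrite /Phi; case: pselect.
have Phi_term (a b : set T) : card_eq_trunc L
    [set: {x | Phi L a x} * {x | Phi L b x}] [set: {x | a x} * {x | b x}].
  by apply: card_eq_trunc_setX => //; apply: card_eq_trunc_sig_Phi.
apply: card_eq_trunc_trans
  (card_eq_trunc_sigT (fun i => Phi_term (mu s t i) (mu r i x))) _.
apply: card_eq_trunc_trans (card_eq_trunc_le LK (mu_assoc r s t x)) _.
by apply/card_eq_trunc_sym/card_eq_trunc_sigT => j; apply: Phi_term.
Qed.
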